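(* Let $G$ be a weighted planar graph with strictly positive edge weights in which shortest paths are unique. Let $R_{i+1}$ be a region (edge-induced subgraph) of $G$ whose boundary vertex set $\partial R_{i+1}$ lies on a single simple cycle $C$ bounding a face (hole) of $R_{i+1}$, and let $R_{i+1}^{\operatorname{out}}$ denote the subgraph of $G$ induced by the edges lying on the side of $C$ not containing $R_{i+1}$, together with $C$. Let $R_i$ be a subregion of $R_{i+1}$ (a region of the next-finer level of the hierarchical division whose edges are contained in $R_{i+1}$), let $q\in\partial R_i$, and let $v$ be a vertex with $v\notin R_{i+1}$. Consider the additively weighted Voronoi diagram of $R_{i+1}^{\operatorname{out}}$ with site set $\partial R_{i+1}$ and weights $\omega(s)=\operatorname{dist}_G(q,s)$. Then $v\in\operatorname{Vor}(s)$ if and only if $s$ is the last vertex of $\partial R_{i+1}$ on the shortest path from $q$ to $v$ in $G$; moreover, for this $s$, $d^\omega(s,v)=\operatorname{dist}_G(q,v)$.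
   Context: For a region $R$ of a division of $G$ (a collection of edge-induced subgraphs whose union is $G$), $\partial R$ is the set of vertices of $R$ that belong to more than one region. Additively weighted Voronoi diagram: given a graph $H$, a set $S$ of sites on a face of $H$, and weights $\omega:S\to\mathbb{R}_{\ge 0}$, define $d^\omega(s,v)=\omega(s)+\operatorname{dist}_H(s,v)$ for $s\in S$, $v\in V(H)$, and $\operatorname{Vor}(s)=\{v\in V(H) : \forall s'\neq s,\ (d^\omega(s,v),-\omega(s)) < (d^\omega(s',v),-\omega(s'))\}$, where pairs are compared lexicographically (i.e., ties in distance are broken in favor of larger $\omega$). Here $H=R_{i+1}^{\operatorname{out}}$, so distances in $d^\omega$ are measured in $R_{i+1}^{\operatorname{out}}$. *)

From HB Require Import structures.
From mathcomp Require Import all_boot all_order all_algebra.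
From mathcomp Require Import classical_sets reals ereal.
Set Implicit Arguments. Unset Strict Implicit. Unset Printing Implicit Defensive.
Import Order.TTheory GRing.Theory Num.Theory.
Local Open Scope ring_scope.

(* A (sub)graph on the finite vertex type V is given by its (symmetric) edge
   relation.  Edge-induced subgraphs are subrelations of the edge relation of G. *)
Section Graphs.
Variables (R : realType) (V : finType).

Fixpoint wlen (w : V -> V -> R) (x : V) (p : seq V) : R :=
  if p is y :: p' then w x y + wlen w y p' else 0.

Definition walk (S : rel V) (x y : V) (p : seq V) : bool :=
  path S x p && (last x p == y).

(* dist_S(x,y) : infimum of walk lengths, +oo if y is unreachable *)
Definition dist (S : rel V) (w : V -> V -> R) (x y : V) : \bar R :=
  ereal_inf [set (wlen w x p)%:E | p in [set p | walk S x y p]].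

Definition vert (S : rel V) : pred V := fun x => [exists y, S x y].

Definition subgraph (e S : rel V) : Prop :=
  (forall x y, S x y -> e x y) /\ (forall x y, S x y = S y x).

Definition division (e : rel V) (I : finType) (reg : I -> rel V) : Prop :=
  (forall i, subgraph e (reg i)) /\
  (forall x y, e x y = [exists i, reg i x y]).

Definition bd (I : finType) (reg : I -> rel V) (i : I) : pred V :=
  fun x => vert (reg i) x && [exists j, (j != i) && vert (reg j) x].

Definition cycle_edge (c : seq V) : rel V :=
  fun x y => (x \in c) && (y \in c) && ((y == next c x) || (x == next c y)).

Definition shortest (e : rel V) (w : V -> V -> R) (x y : V) (p : seq V) : Prop :=
  walk e x y p /\ (wlen w x p)%:E = dist e w x y.

Definition last_on (B : pred V) (x : V) (p : seq V) (s : V) : Prop :=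
  exists p1 p2, x :: p = p1 ++ s :: p2 /\ s \in B /\ all (fun u => u \notin B) p2.

Definition dw (H : rel V) (w : V -> V -> R) (om : V -> \bar R) (s v : V) : \bar R :=
  (om s + dist H w s v)%E.

(* additively weighted Voronoi cell of site s (sites: the set S) in H,
   with lexicographic comparison of (d^omega(s,v), -omega(s)) *)
Definition Vor (H : rel V) (w : V -> V -> R) (S : pred V) (om : V -> \bar R)
  (s : V) : pred V :=
  fun v => vert H v &&
    [forall s', ((s' \in S) && (s' != s)) ==>
       ((dw H w om s v < dw H w om s' v)%E ||
        ((dw H w om s v == dw H w om s' v) && (om s' < om s)%E))].

End Graphs.

(* Let p be the shortest q-v path and s the last vertex of the boundary B of
   R_{i+1} on it.  After s, p never meets B again and ends outside R_{i+1}, so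
   it uses no edge of R_{i+1}: that suffix lies in R_out, and d^omega(s,v) =
   dist(q,s) + dist_out(s,v) = dist(q,v).  For another site s', concatenating
   shortest walks gives d^omega(s',v) >= dist(q,v); in case of equality the
   concatenation is the unique shortest path, so s' precedes s on it and
   omega(s') < omega(s) by positivity of the weights: the tie goes to s. *)

From HB Require Import structures.
From mathcomp Require Import all_boot all_order all_algebra.
From mathcomp Require Import classical_sets reals ereal.
From mathcomp Require boolp.
Import Order.TTheory GRing.Theory Num.Theory.
Set Implicit Arguments. Unset Strict Implicit. Unset Printing Implicit Defensive.
Local Open Scope ring_scope.
Local Open Scope classical_set_scope.

Section Walks.
Variables (R : realType) (V : finType) (w : V -> V -> R).
Implicit Types (S : rel V) (x y z : V) (p r : seq V).

Lemma wlen_cat x p r : wlen w x (p ++ r) = wlen w x p + wlen w (last x p) r.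
Proof. by elim: p x => [|y p IH] x /=; rewrite ?add0r // IH addrA. Qed.

Lemma walk_cat S x y z p r :
  walk S x y p -> walk S y z r -> walk S x z (p ++ r).
Proof. by rewrite /walk cat_path last_cat => /andP[-> /eqP->] /andP[-> ->]. Qed.

Lemma walk_catP S x y p r :
  walk S x y (p ++ r) -> walk S x (last x p) p /\ walk S (last x p) y r.
Proof. by rewrite /walk cat_path last_cat eqxx => /andP[/andP[-> ->] ->]. Qed.

Lemma walk_sub S1 S2 x y p : subrel S1 S2 -> walk S1 x y p -> walk S2 x y p.
Proof. by move=> sub /andP[Hp Hl]; rewrite /walk (sub_path sub Hp) Hl. Qed.

Lemma dist_le_wlen S x y p : walk S x y p -> (dist S w x y <= (wlen w x p)%:E)%E.
Proof. by move=> Hp; apply: ereal_inf_lbound; exists p. Qed.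

Lemma dist_ge S x y a :
  (forall p, walk S x y p -> a <= wlen w x p) -> (a%:E <= dist S w x y)%E.
Proof. by move=> H; apply/ereal_infP => _ [p Hp <-]; rewrite lee_fin H. Qed.

Lemma dist_unreachable S x y : ~ (exists p, walk S x y p) -> dist S w x y = +oo%E.
Proof.
move=> nowalk; rewrite /dist -[X in ereal_inf X]/(_ @` _).
rewrite (_ : [set p | walk S x y p] = set0) ?image_set0 ?ereal_inf0 //.
by apply/seteqP; split => // p Hp; apply: nowalk; exists p.
Qed.

Section PositiveWeights.
Variable S : rel V.
Hypothesis w_pos : forall x y, S x y -> 0 < w x y.

Lemma wlen_ge0 x p : path S x p -> 0 <= wlen w x p.
Proof.
elim: p x => [|y p IH] x //= /andP[Sxy Hp].
by rewrite addr_ge0 ?IH // ltW ?w_pos.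
Qed.

Lemma wlen_gt0 x p : path S x p -> p != [::] -> 0 < wlen w x p.
Proof.
by case: p => [|y p] //= /andP[Sxy Hp] _; rewrite ltr_pwDl ?w_pos ?wlen_ge0.
Qed.

Lemma wlen_suffix_le x p r : path S x (p ++ r) ->
  wlen w (last x p) r <= wlen w x (p ++ r).
Proof. by rewrite cat_path wlen_cat lerDr => /andP[/wlen_ge0]. Qed.

Lemma walk_shorten x y p : walk S x y p ->
  exists p', [/\ walk S x y p', uniq (x :: p') & wlen w x p' <= wlen w x p].
Proof.
elim: p x => [|z p IH] x; first by exists [::].
rewrite {1}/walk /= => /andP[/andP[Sxz Hp] Hl].
have [p' [/andP[Hp' Hl'] Hu' Hle]] := IH z (introT andP (conj Hp Hl)).
have Hw : walk S x y (z :: p') by rewrite /walk /= Sxz Hp' Hl'.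
have Hle' : wlen w x (z :: p') <= wlen w x (z :: p) by rewrite /= lerD2l.
case Hx: (x \in z :: p'); last by exists (z :: p'); rewrite /= Hx.
move: Hx Hw Hu' Hle'; case/splitPr=> p1 p2; rewrite -cat_rcons => Hw Hu Hle'.
exists p2; split.
- by have [_] := walk_catP Hw; rewrite last_rcons.
- by move: Hu; rewrite cat_rcons cat_uniq => /and3P[_ _].
- apply: le_trans Hle'; have := wlen_suffix_le (proj1 (andP Hw)).
  by rewrite last_rcons.
Qed.

(* The minimum is taken over the finite type of tuples of length below #|V|,
   which contains every simple walk. *)
Lemma dist_attained x y : (exists p, walk S x y p) ->
  exists p, walk S x y p /\ (wlen w x p)%:E = dist S w x y.
Proof.
move=> [p0 Hp0].
pose T := {n : 'I_#|V| & n.-tuple V}.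
have encode p : uniq (x :: p) -> exists t : T, tagged t = p :> seq V.
  move=> /card_uniqP Hu; have Hs : (size p < #|V|)%N.
    by rewrite -[(size p).+1]/(size (x :: p)) -Hu max_card.
  by exists (Tagged (fun n : 'I_#|V| => n.-tuple V)
                    (in_tuple p : (Ordinal Hs).-tuple V)).
pose P (t : T) := walk S x y (tagged t : seq V).
have [p1 [Hw1 Hu1 _]] := walk_shorten Hp0.
have [t0 Et0] := encode p1 Hu1.
have Pt0 : P t0 by rewrite /P Et0.
case: (arg_minP (fun t : T => wlen w x (tagged t)) Pt0) => t Pt Hmin.
exists (tagged t); split => //; apply/eqP; rewrite eq_le dist_le_wlen // andbT.
apply: dist_ge => r /walk_shorten [r' [Hw' Hu' Hle']].
have [t' Et'] := encode r' Hu'.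
by apply: le_trans Hle'; rewrite -Et'; apply: Hmin; rewrite /P Et'.
Qed.

End PositiveWeights.
End Walks.

Section ShortestWalks.
Variables (R : realType) (V : finType) (e : rel V) (w : V -> V -> R).
Implicit Types (S : rel V) (x y : V) (p r : seq V).

Lemma shortest_prefix x y p r :
  shortest e w x y (p ++ r) -> shortest e w x (last x p) p.
Proof.
move=> [Hw Hd]; have [Hp Hr] := walk_catP Hw; split => //.
apply/eqP; rewrite eq_le dist_le_wlen // andbT; apply: dist_ge => p' Hp'.
have := dist_le_wlen w (walk_cat Hp' Hr).
by rewrite -Hd !wlen_cat (eqP (proj2 (andP Hp'))) lee_fin lerD2r.
Qed.

Lemma shortest_suffix S x y p r : subrel S e ->
  shortest e w x y (p ++ r) -> path S (last x p) r -> shortest S w (last x p) y r.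
Proof.
move=> sSe [Hw Hd] HrS; have [Hp /andP[_ Hl]] := walk_catP Hw.
have HwS : walk S (last x p) y r by rewrite /walk HrS.
split => //; apply/eqP; rewrite eq_le dist_le_wlen // andbT.
apply: dist_ge => r' /(walk_sub sSe) Hr'.
by have := dist_le_wlen w (walk_cat Hp Hr'); rewrite -Hd !wlen_cat lee_fin lerD2l.
Qed.

Hypothesis w_pos : forall x y, e x y -> 0 < w x y.
Hypothesis e_conn : forall x y, exists p, walk e x y p.

Lemma dw_cases H x y s : subrel H e ->
  dw H w (dist e w x) s y = +oo%E \/
  exists p r, [/\ last x p = s, walk e x y (p ++ r)
                & dw H w (dist e w x) s y = (wlen w x (p ++ r))%:E].
Proof.
move=> sHe; rewrite /dw; have [p [Hp <-]] := dist_attained w_pos (e_conn x s).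
have [[r0 Hr0]|noH] := boolp.pselect (exists r, walk H s y r); last first.
  by left; rewrite dist_unreachable.
have wH_pos a b : H a b -> 0 < w a b by move/sHe; exact: w_pos.
have [r [Hr <-]] := dist_attained wH_pos (ex_intro _ r0 Hr0).
right; exists p, r; have Hl := eqP (proj2 (andP Hp)).
by rewrite wlen_cat Hl (walk_cat Hp (walk_sub sHe Hr)).
Qed.

Lemma dist_le_dw H x y s : subrel H e -> (dist e w x y <= dw H w (dist e w x) s y)%E.
Proof.
move=> /dw_cases-/(_ x y s) [->|[p [r [_ Hw ->]]]]; first exact: leey.
exact: dist_le_wlen.
Qed.

Lemma dw_eq_dist H x y s : subrel H e -> dw H w (dist e w x) s y = dist e w x y ->
  exists p r, last x p = s /\ shortest e w x y (p ++ r).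
Proof.
move=> /dw_cases-/(_ x y s) [->|[p [r [Hl Hw ->]]]] Hd; last by exists p, r.
by have [p [_ Hp]] := dist_attained w_pos (e_conn x y); rewrite -Hd in Hp.
Qed.

End ShortestWalks.

Lemma Vor_eq_site (R : realType) (V : finType) (H : rel V) (w : V -> V -> R)
    (S : pred V) (om : V -> \bar R) (s0 v : V) :
  vert H v -> s0 \in S ->
  (forall s, s \in S -> s != s0 ->
     (dw H w om s0 v < dw H w om s v)%E \/
     (dw H w om s v = dw H w om s0 v /\ (om s < om s0)%E)) ->
  forall s, s \in S -> Vor H w S om s v = (s == s0).
Proof.
move=> Hv S0 beats s Ss; case: eqVneq => [->|ne].
  rewrite /Vor Hv; apply/forallP => s'; apply/implyP => /andP[Ss' ne'].
  by case: (beats s' Ss' ne') => [->|[-> ->]]; rewrite ?eqxx ?orbT.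
apply/negP => /andP[_ /forallP/(_ s0)]; rewrite S0 eq_sym ne /=.
case: (beats s Ss ne) => [lt|[eq lt]] /orP[h|/andP[/eqP h h']].
- by have := lt_trans lt h; rewrite ltxx.
- by rewrite h ltxx in lt.
- by rewrite eq ltxx in h.
- by have := lt_trans lt h'; rewrite ltxx.
Qed.

Lemma cycle_edge_sub (V : finType) (S : rel V) (c : seq V) :
  (forall x y, S x y = S y x) -> cycle S c -> subrel (cycle_edge c) S.
Proof.
move=> Ssym Hc x y /andP[/andP[xc yc] /orP[/eqP->|/eqP->]].
  exact: next_cycle Hc xc.
by rewrite Ssym; exact: next_cycle Hc yc.
Qed.

Section Division.
Variables (V : finType) (e : rel V) (I : finType) (reg : I -> rel V).
Hypothesis reg_div : division e reg.
Variable j : I.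

Lemma edge_leaving_region x y : e x y -> ~~ vert (reg j) y ->
  ~~ reg j x y /\ (vert (reg j) x -> bd reg j x).
Proof.
move=> exy nvy; have nrxy : ~~ reg j x y.
  by apply: contra nvy => rxy; apply/existsP; exists x; rewrite (reg_div.1 j).2.
split=> // vx; rewrite /bd vx; move: exy; rewrite reg_div.2 => /existsP[i rixy].
have nij : i != j by apply: contraNneq nrxy => <-.
by apply/existsP; exists i; rewrite nij; apply/existsP; exists y.
Qed.

(* Read backwards from its endpoint outside the region, a walk can only enter
   the region at a boundary vertex. *)
Lemma path_leaving_region x p : path e x p -> ~~ vert (reg j) (last x p) ->
  all (predC (bd reg j)) p ->
  path (fun a b => e a b && ~~ reg j a b) x p /\ (vert (reg j) x -> bd reg j x).
Proof.
elim: p x => [|y p IH] x /=; first by move=> _ nvx _; split=> // /(negP nvx).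
move=> /andP[exy Hp] Hl /andP[nBy Hall].
have [HpR vy_bd] := IH y Hp Hl Hall.
have [nrxy vx_bd] := edge_leaving_region exy (contra vy_bd nBy).
by rewrite exy nrxy HpR.
Qed.

Lemma path_leaving_region_has_bd x p : path e x p -> vert (reg j) x ->
  ~~ vert (reg j) (last x p) -> has (bd reg j) (x :: p).
Proof.
move=> Hp vx nvl; apply: contraT; rewrite -all_predC => /andP[nbx Hall].
by have [_ /(_ vx) bx] := path_leaving_region Hp nvl Hall; rewrite /= bx in nbx.
Qed.

End Division.

Section LastOn.
Variables (V : finType) (B : pred V).
Implicit Types (x s : V) (p r : seq V).

Lemma last_on_cat x p r : last x p \in B -> all (predC B) r ->
  last_on B x (p ++ r) (last x p).
Proof.
by move=> Bl Hr; exists (belast x p), r; rewrite -cat_cons lastI cat_rcons.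
Qed.

Lemma has_last_split x p : has B (x :: p) ->
  exists p1 p2, [/\ p = p1 ++ p2, last x p1 \in B & all (predC B) p2].
Proof.
elim/last_ind: p => [|p y IH]; first by rewrite /= orbF => Bx; exists [::], [::].
case By: (B y); first by exists (rcons p y), [::]; rewrite cats0 last_rcons.
rewrite /= has_rcons By /= => /IH [p1 [p2 [-> Bl Hp2]]].
by exists p1, (rcons p2 y); rewrite rcons_cat all_rcons /= By.
Qed.

Lemma last_onE x p s : last_on B x p s -> s = last x (seq.filter B (x :: p)).
Proof.
move=> [p1 [p2 [-> [Bs Hp2]]]]; rewrite filter_cat /= [B s]Bs.
have -> : seq.filter B p2 = [::].
  elim: p2 Hp2 => //= a l IH /andP[nBa /IH ->].
  by rewrite unfold_in in nBa; rewrite (negbTE nBa).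
by rewrite cats1 last_rcons.
Qed.

Lemma last_on_inj x p s1 s2 : last_on B x p s1 -> last_on B x p s2 -> s1 = s2.
Proof. by move=> /last_onE-> /last_onE->. Qed.

Lemma prefix_ending_in (x : V) p r p' r' : p ++ r = p' ++ r' ->
  last x p' \in B -> all (predC B) r -> exists d, p = p' ++ d.
Proof.
move=> E Bl Hr; case: (leqP (size p') (size p)) => hs.
  have Tp : take (size p') p = p' by rewrite -(takel_cat r hs) E take_size_cat.
  by exists (drop (size p') p); rewrite -{1}(cat_take_drop (size p') p) Tp.
have Ep' : p' = p ++ take (size p' - size p) r.
  by rewrite -[LHS](take_size_cat r' (erefl _)) -E take_cat ltnNge (ltnW hs).
move: Bl hs; rewrite Ep' last_cat; case Et: (take _ r) => [|a t] /= Bl hs.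
  by rewrite cats0 ltnn in hs.
have : last a t \in r by apply: (@mem_take (size p' - size p)); rewrite Et mem_last.
by move/(allP Hr) => /= /negP[]; exact: Bl.
Qed.

End LastOn.

Section LastBoundarySite.
Variables (R : realType) (V : finType) (e : rel V) (w : V -> V -> R).
Hypothesis w_pos : forall x y, e x y -> 0 < w x y.
Hypothesis e_conn : forall x y, exists p, walk e x y p.
Hypothesis uniq_sp :
  forall x y p1 p2, shortest e w x y p1 -> shortest e w x y p2 -> p1 = p2.
Variables (I : finType) (reg : I -> rel V) (j : I).
Hypothesis reg_div : division e reg.
Variables (H : rel V) (q v : V).
Hypothesis H_e : subrel H e.
Hypothesis H_out : forall x y, e x y -> ~~ reg j x y -> H x y.
Hypotheses (vq : vert (reg j) q) (nvv : ~~ vert (reg j) v).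

Lemma vert_out_target : vert H v.
Proof.
have [[|y r] /andP[/= Hr /eqP Hl]] := e_conn v q; first by move: nvv; rewrite Hl vq.
case/andP: Hr => evy _; apply/existsP; exists y; apply: H_out evy _.
by apply: contra nvv => rvy; apply/existsP; exists y.
Qed.

Lemma shortest_split_last_bd : exists pre post,
  [/\ shortest e w q v (pre ++ post), last q pre \in bd reg j
    & all (predC (bd reg j)) post].
Proof.
have [p sp] : exists p, shortest e w q v p := dist_attained w_pos (e_conn q v).
have [/andP[Hp /eqP Hl] _] := sp.
have nvl : ~~ vert (reg j) (last q p) by rewrite Hl.
have [pre [post [Ep Bl Hpost]]] :=
  has_last_split (path_leaving_region_has_bd reg_div Hp vq nvl).
by exists pre, post; rewrite -Ep.
Qed.

Variables (pre post : seq V).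
Hypothesis sp : shortest e w q v (pre ++ post).
Hypothesis post_out : all (predC (bd reg j)) post.

Lemma dw_last_bd : dw H w (dist e w q) (last q pre) v = dist e w q v.
Proof.
have HpostH : path H (last q pre) post.
  have [_ /andP[Hp /eqP Hl]] := walk_catP (proj1 sp).
  have nvl : ~~ vert (reg j) (last (last q pre) post) by rewrite Hl.
  have [HpostE _] := path_leaving_region reg_div Hp nvl post_out.
  by apply: sub_path HpostE => x y /andP[]; exact: H_out.
have [_ dpre] := shortest_prefix sp.
have [_ dpost] := shortest_suffix H_e sp HpostH.
by rewrite /dw -dpre -dpost -sp.2 wlen_cat.
Qed.

(* A site s' ties with the last boundary vertex only if s' lies on the unique
   shortest path, strictly before it. *)
Lemma last_bd_beats s' : s' \in bd reg j -> s' != last q pre ->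
  (dw H w (dist e w q) (last q pre) v < dw H w (dist e w q) s' v)%E \/
  (dw H w (dist e w q) s' v = dw H w (dist e w q) (last q pre) v /\
   (dist e w q s' < dist e w q (last q pre))%E).
Proof.
move=> Bs' ne; rewrite dw_last_bd.
have := dist_le_dw w_pos e_conn q v s' H_e.
rewrite le_eqVlt => /orP[/eqP Eq|]; last by left.
right; split => //.
have [r1 [r2 [Hl sp1]]] := dw_eq_dist w_pos e_conn H_e (esym Eq).
have Bl1 : last q r1 \in bd reg j by rewrite Hl.
have [d Ed] := prefix_ending_in (esym (uniq_sp sp1 sp)) Bl1 post_out.
have d_nil : d != [::] by apply: contraNneq ne => d0; rewrite Ed d0 cats0 Hl.
have [sp_pre dpre] := shortest_prefix sp; rewrite Ed in sp_pre dpre.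
have [_ /andP[Hd _]] := walk_catP sp_pre.
rewrite -Hl -(shortest_prefix sp1).2 Ed -dpre wlen_cat lte_fin ltrDl.
exact: (wlen_gt0 w_pos Hd d_nil).
Qed.

End LastBoundarySite.

Theorem lemma3 (R : realType) (V : finType) (e : rel V) (w : V -> V -> R)
  (* G: simple undirected connected graph, strictly positive symmetric weights *)
  (e_sym : forall x y, e x y = e y x) (e_irr : forall x, ~~ e x x)
  (w_sym : forall x y, w x y = w y x)
  (w_pos : forall x y, e x y -> 0 < w x y)
  (G_conn : forall x y, exists p, walk e x y p)
  (* shortest paths are unique *)
  (uniq_sp : forall x y p1 p2, shortest e w x y p1 -> shortest e w x y p2 -> p1 = p2)
  (* the two levels of the hierarchical division *)
  (I1 I0 : finType) (reg1 : I1 -> rel V) (reg0 : I0 -> rel V)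
  (div1 : division e reg1) (div0 : division e reg0)
  (j : I1) (k : I0)
  (sub_k : forall x y, reg0 k x y -> reg1 j x y)
  (* C: simple cycle of R_{i+1} containing the boundary of R_{i+1} *)
  (c : seq V) (c_uniq : uniq c) (c_size : (3 <= size c)%N) (c_cyc : cycle (reg1 j) c)
  (c_bd : forall x, bd reg1 j x -> x \in c)
  (q v : V) (q_bd : bd reg0 k q) (v_out : ~~ vert (reg1 j) v) :
  let Rout : rel V := fun x y => (e x y && ~~ reg1 j x y) || cycle_edge c x y in
  let om : V -> \bar R := fun s => dist e w q s in
  forall s, bd reg1 j s ->
    (Vor Rout w (bd reg1 j) om s v <->
       (forall p, shortest e w q v p -> last_on (bd reg1 j) q p s)) /\
    ((forall p, shortest e w q v p -> last_on (bd reg1 j) q p s) ->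
       dw Rout w om s v = dist e w q v).
Proof.
move=> Rout om s Bs.
have Rout_e : subrel Rout e.
  move=> x y /orP[/andP[] // | /(cycle_edge_sub (div1.1 j).2 c_cyc)].
  exact: (div1.1 j).1.
have Rout_out x y : e x y -> ~~ reg1 j x y -> Rout x y by rewrite /Rout => -> ->.
have vq : vert (reg1 j) q.
  by case/andP: q_bd => /existsP[y /sub_k rqy] _; apply/existsP; exists y.
have [pre [post [sp Bss Hpost]]] :=
  shortest_split_last_bd w_pos G_conn div1 vq v_out.
have VorE := Vor_eq_site (vert_out_target G_conn Rout_out vq v_out) Bss
  (last_bd_beats w_pos G_conn uniq_sp div1 Rout_e Rout_out v_out sp Hpost) Bs.
have s_last : (forall p, shortest e w q v p -> last_on (bd reg1 j) q p s) <->
              s = last q pre.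
  split=> [/(_ _ sp) lo_s | -> p /(uniq_sp _ _ _ _ sp) <-]; last exact: last_on_cat.
  exact: last_on_inj lo_s (last_on_cat Bss Hpost).
rewrite s_last VorE; split; first by split=> [/eqP|->].
by move=> ->; exact: (dw_last_bd div1 Rout_e Rout_out v_out sp Hpost).
Qed.
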